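(* Consider the model described in the context and suppose the Lipschitz assumption holds. Let $Q$ map each point $z\in\mathbb R^{\mathcal X}$ to a nearest point of $\mathcal Q_n$, i.e. $Q(z)\in\arg\min_{\hat z\in\mathcal Q_n}\|z-\hat z\|_\infty$. Define $\tilde V_{T+1}(\hat z):=0$ for $\hat z\in\mathcal Q_n$ and, for $t=T,\dots,1$ and $\hat z\in\mathcal Q_n$, $$\tilde V_t(\hat z):=\min_{\gamma\in\mathcal G}\Big(\hat c_t(\hat z,\gamma)+\tilde V_{t+1}\big(Q(\hat f_t(\hat z,\gamma))\big)\Big).$$ Let $\psi_t(\hat z)$ be any minimizer of this right-hand side, let $\hat z_1=Q(\mathbb P(x_1=\cdot))$ and $\hat z_{t+1}=Q(\hat f_t(\hat z_t,\psi_t(\hat z_t)))$, and define the fully decentralized strategy $\mathbf g=\{g_t\}_{t=1}^T$ with $u^i_t=g_t(x^i_t)$, $g_t(x):=\psi_t(\hat z_t)(x)$. Then $|J(\mathbf g)-J^\ast|\le\epsilon(n)$ for some $\epsilon(n)\in\mathcal O(1/\sqrt n)$.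
   Context: Fix $n\in\mathbb N$ agents, a horizon $T\in\mathbb N$, finite sets $\mathcal X,\mathcal U,\mathcal W$; $\mathbb N_k=\{1,\dots,k\}$. Let $\mathcal I(\mathcal X)=[0,1]^{\mathcal X}$, $\Delta(\mathcal X)$ the probability vectors on $\mathcal X$, $\mathcal M_n=\{m\in\Delta(\mathcal X): m(x)\in\{0,\tfrac1n,\dots,1\}\}$, and $\mathcal Q_n=\{0,\tfrac1n,\dots,1\}^{\mathcal X}$. Agent $i\in\mathbb N_n$ has state $x^i_t\in\mathcal X$, action $u^i_t\in\mathcal U$; mean-field $m_t(x)=\frac1n\sum_i\mathbb 1(x^i_t=x)$. Dynamics $x^i_{t+1}=f_t(x^i_t,u^i_t,w^i_t,m_t)$, $f_t:\mathcal X\times\mathcal U\times\mathcal W\times\mathcal I(\mathcal X)\to\mathcal X$. Initial states i.i.d. with law $\mathbb P(x_1=\cdot)$; for each $t$ the noises $w^1_t,\dots,w^n_t$ are i.i.d. with law $\mathbb P(w_t=\cdot)$; initial states and all noises mutually independent. $\mathbb P(y|x,u,z)=\sum_w\mathbb 1(f_t(x,u,w,z)=y)\mathbb P(w_t=w)$. Costs $\ell_t:\mathcal X\times\mathcal U\times\mathcal I(\mathcal X)\to\mathbb R_{\ge0}$. Lipschitz assumption: constants $K^1_t,K^2_t>0$ with $|\mathbb P(y|x,u,z_1)-\mathbb P(y|x,u,z_2)|\le K^1_t\|z_1-z_2\|_\infty$, $|\ell_t(x,u,z_1)-\ell_t(x,u,z_2)|\le K^2_t\|z_1-z_2\|_\infty$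 for all $x,y,u$, $z_1,z_2\in\mathcal I(\mathcal X)$. Cost of a strategy: $J=\mathbb E[\sum_{t=1}^T\frac1n\sum_i\ell_t(x^i_t,u^i_t,m_t)]$. $J^\ast$ is the optimal cost over mean-field sharing strategies $u^i_t=g_t(x^i_t,m_t)$, $g_t:\mathcal X\times\mathcal M_n\to\mathcal U$. $\mathcal G$ is the set of maps $\gamma:\mathcal X\to\mathcal U$; $\hat f_t(z,\gamma)(y)=\sum_x z(x)\mathbb P(y|x,\gamma(x),z)$, $\hat c_t(z,\gamma)=\sum_x z(x)\ell_t(x,\gamma(x),z)$. Model data do not depend on $n$; $\mathcal O(1/\sqrt n)$ means bounded by $C/\sqrt n$ with $C$ independent of $n$. *)

From HB Require Import structures.
From mathcomp Require Import all_boot all_order all_algebra.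
From mathcomp Require Import classical_sets reals.
Set Implicit Arguments. Unset Strict Implicit. Unset Printing Implicit Defensive.
Import Order.TTheory GRing.Theory Num.Theory.
Local Open Scope ring_scope.

(* Times are 1-indexed: t = 1..T.  Mean-fields / distributions are X -> R. *)

Definition supnorm (R : realType) (X : finType) (z : X -> R) : R :=
  \big[Num.max/0]_(x : X) `|z x|.

Definition inI (R : realType) (X : finType) (z : X -> R) : Prop :=
  forall x, 0 <= z x <= 1.

Definition inQn (R : realType) (X : finType) (n : nat) (z : X -> R) : Prop :=
  forall x, exists k : nat, (k <= n)%N /\ z x = k%:R / n%:R.

Definition nearest_quantizer (R : realType) (X : finType) (n : nat)
    (Q : (X -> R) -> (X -> R)) : Prop :=
  forall z, inQn n (Q z) /\
    forall zh, inQn n zh ->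
      supnorm (fun x => z x - Q z x) <= supnorm (fun x => z x - zh x).

Definition Pk (R : realType) (X U W : finType)
    (pw : nat -> W -> R) (f : nat -> X -> U -> W -> (X -> R) -> X)
    (t : nat) (y x : X) (u : U) (z : X -> R) : R :=
  \sum_(w : W) (f t x u w z == y)%:R * pw t w.

Definition fhat (R : realType) (X U W : finType)
    (pw : nat -> W -> R) (f : nat -> X -> U -> W -> (X -> R) -> X)
    (t : nat) (z : X -> R) (g : {ffun X -> U}) : X -> R :=
  fun y => \sum_(x : X) z x * Pk pw f t y x (g x) z.

Definition chat (R : realType) (X U : finType)
    (l : nat -> X -> U -> (X -> R) -> R)
    (t : nat) (z : X -> R) (g : {ffun X -> U}) : R :=
  \sum_(x : X) z x * l t x (g x) z.

(* Vaux k t z : value with k stages remaining starting at time t *)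
Fixpoint Vaux (R : realType) (X U W : finType)
    (pw : nat -> W -> R) (f : nat -> X -> U -> W -> (X -> R) -> X)
    (l : nat -> X -> U -> (X -> R) -> R) (Q : (X -> R) -> (X -> R))
    (k t : nat) (z : X -> R) : R :=
  match k with
  | 0 => 0
  | k'.+1 => inf (range (fun g : {ffun X -> U} =>
               chat l t z g + Vaux pw f l Q k' t.+1 (Q (fhat pw f t z g))))
  end.

Definition Vtil (R : realType) (X U W : finType) (T : nat)
    (pw : nat -> W -> R) (f : nat -> X -> U -> W -> (X -> R) -> X)
    (l : nat -> X -> U -> (X -> R) -> R) (Q : (X -> R) -> (X -> R))
    (t : nat) (z : X -> R) : R :=
  Vaux pw f l Q (T.+1 - t) t z.

Definition is_minimizer (R : realType) (X U W : finType) (T n : nat)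
    (pw : nat -> W -> R) (f : nat -> X -> U -> W -> (X -> R) -> X)
    (l : nat -> X -> U -> (X -> R) -> R) (Q : (X -> R) -> (X -> R))
    (psi : nat -> (X -> R) -> {ffun X -> U}) : Prop :=
  forall t, (1 <= t <= T)%N -> forall zh, inQn n zh ->
    forall g : {ffun X -> U},
      chat l t zh (psi t zh) + Vtil T pw f l Q t.+1 (Q (fhat pw f t zh (psi t zh)))
      <= chat l t zh g + Vtil T pw f l Q t.+1 (Q (fhat pw f t zh g)).

(* zhat k = \hat z_{k+1} *)
Fixpoint zhat (R : realType) (X U W : finType)
    (px : X -> R) (pw : nat -> W -> R) (f : nat -> X -> U -> W -> (X -> R) -> X)
    (Q : (X -> R) -> (X -> R)) (psi : nat -> (X -> R) -> {ffun X -> U})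
    (k : nat) : X -> R :=
  match k with
  | 0 => Q px
  | k'.+1 => let z := zhat px pw f Q psi k' in Q (fhat pw f k'.+1 z (psi k'.+1 z))
  end.

(* mean-field sharing strategy: u^i_t = g t (x^i_t) (m_t) *)
Definition mf_strategy (R : realType) (X U : finType) := nat -> X -> (X -> R) -> U.

Definition gdec (R : realType) (X U W : finType)
    (px : X -> R) (pw : nat -> W -> R) (f : nat -> X -> U -> W -> (X -> R) -> X)
    (Q : (X -> R) -> (X -> R)) (psi : nat -> (X -> R) -> {ffun X -> U})
    : mf_strategy R X U :=
  fun t x _ => psi t (zhat px pw f Q psi t.-1) x.

Definition emp (R : realType) (X : finType) (n : nat) (xs : {ffun 'I_n -> X}) : X -> R :=
  fun x => #|[set i | xs i == x]|%:R / n%:R.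

(* traj k = joint state at time k+1, given initial states and the noises
   ws i = (w^1_{i+1},...,w^n_{i+1}) for i < T *)
Fixpoint traj (R : realType) (X U W : finType) (n T : nat)
    (f : nat -> X -> U -> W -> (X -> R) -> X) (g : mf_strategy R X U)
    (x1 : {ffun 'I_n -> X}) (ws : {ffun 'I_T -> {ffun 'I_n -> W}}) (k : nat)
    : {ffun 'I_n -> X} :=
  match k with
  | 0 => x1
  | k'.+1 =>
      let xs := traj f g x1 ws k' in
      let m := emp R xs in
      match @insub nat (fun j => j < T)%N 'I_T k' with
      | Some i => [ffun j => f k'.+1 (xs j) (g k'.+1 (xs j) m) (ws i j) m]
      | None => xs
      end
  end.

(* expected cost J(g) : exact expectation over the finite probability space of
   initial states and noises *)
Definition Jcost (R : realType) (X U W : finType) (n T : nat)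
    (px : X -> R) (pw : nat -> W -> R) (f : nat -> X -> U -> W -> (X -> R) -> X)
    (l : nat -> X -> U -> (X -> R) -> R) (g : mf_strategy R X U) : R :=
  \sum_(x1 : {ffun 'I_n -> X}) \sum_(ws : {ffun 'I_T -> {ffun 'I_n -> W}})
    ((\prod_(i < n) px (x1 i)) *
     (\prod_(t < T) \prod_(i < n) pw t.+1 (ws t i))) *
    \sum_(t < T)
      (let xs := traj f g x1 ws t in
       let m := emp R xs in
       n%:R^-1 * \sum_(i < n) l t.+1 (xs i) (g t.+1 (xs i) m) m).

Definition Jstar (R : realType) (X U W : finType) (n T : nat)
    (px : X -> R) (pw : nat -> W -> R) (f : nat -> X -> U -> W -> (X -> R) -> X)
    (l : nat -> X -> U -> (X -> R) -> R) : R :=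
  inf (range (fun g : mf_strategy R X U => Jcost n T px pw f l g)).

(* Both J(g) and J^* are compared with the quantized value V~_1(z^_1).  With r
   stages to go, the n-agent cost-to-go from a joint state with empirical mean
   field m is within L_r |m - z| + e_r / sqrt n of V~(z): from below for every
   mean-field sharing strategy and every z in Q_n, from above for the
   decentralized strategy along z^_t.  The induction step combines the Lipschitz
   bounds on c^_t and f^_t with two facts: given the current joint state, the next
   empirical mean field is within |X| / sqrt n of its conditional mean f^_t(m, g)
   in expected sup norm (a second-moment bound for independent agents), and
   rounding to a nearest point of Q_n at most doubles the distance to a point of
   Q_n.  The same concentration bound applied to the i.i.d. initial states gives
   V~_1(z^_1) - C / sqrt n <= J^* <= J(g) <= V~_1(z^_1) + C / sqrt n. *)

From HB Require Import structures.
From mathcomp Require Import all_boot all_order all_algebra.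
From mathcomp Require Import classical_sets reals.
From mathcomp Require Import ring lra zify.
Import Order.TTheory GRing.Theory Num.Theory.
Local Open Scope ring_scope.
Set Implicit Arguments. Unset Strict Implicit. Unset Printing Implicit Defensive.

Local Notation supdist z1 z2 := (supnorm (fun v => z1 v - z2 v)).

Section Supnorm.
Variables (R : realType) (X : finType).
Implicit Types z m : X -> R.

Lemma supnorm_ge0 z : 0 <= supnorm z.
Proof. by rewrite /supnorm; elim/big_ind: _ => //= a b ha hb; rewrite le_max ha. Qed.

Lemma ler_supnorm z x : `|z x| <= supnorm z.
Proof. exact: (le_bigmax 0 (fun x => `|z x|) x). Qed.

Lemma supnorm_le z c : 0 <= c -> (forall x, `|z x| <= c) -> supnorm z <= c.
Proof. by move=> c0 zc; apply/bigmax_leP; split=> // x _; apply: zc. Qed.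

Lemma supnorm_le_sum z : supnorm z <= \sum_x `|z x|.
Proof.
apply: supnorm_le => [|x]; first exact: sumr_ge0.
by rewrite (bigD1 x) //= lerDl sumr_ge0.
Qed.

Lemma supdistC z1 z2 : supdist z1 z2 = supdist z2 z1.
Proof. by apply: eq_bigr => x _; rewrite distrC. Qed.

Lemma supdist_triangle z1 z2 z3 :
  supdist z1 z3 <= supdist z1 z2 + supdist z2 z3.
Proof.
apply: supnorm_le => [|x]; first by rewrite addr_ge0 ?supnorm_ge0.
have -> : z1 x - z3 x = (z1 x - z2 x) + (z2 x - z3 x) by rewrite addrA subrK.
apply: le_trans (ler_normD _ _) (lerD _ _).
  exact: (ler_supnorm (fun x => z1 x - z2 x)).
exact: (ler_supnorm (fun x => z2 x - z3 x)).
Qed.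

Lemma inI_norm_le1 z x : inI z -> `|z x| <= 1.
Proof. by move=> /(_ x) /andP[z0 z1]; rewrite ger0_norm. Qed.

Lemma nearest_quantizer_dist n Q m a : nearest_quantizer n Q -> inQn n m ->
  supdist m (Q a) <= 2 * supdist m a.
Proof.
move=> /(_ a) [_ Qmin] mQ.
have := supdist_triangle m a (Q a); have := Qmin m mQ.
rewrite (supdistC a m); lra.
Qed.

End Supnorm.

Lemma expect_abs_sqr_le (R : realType) (I : finType) (w D : I -> R) :
  (forall i, 0 <= w i) -> \sum_i w i = 1 ->
  (\sum_i w i * `|D i|) ^+ 2 <= \sum_i w i * D i ^+ 2.
Proof.
move=> w0 w1; set e := \sum_i w i * `|D i|.
have : 0 <= \sum_i w i * (`|D i| - e) ^+ 2.
  by apply: sumr_ge0 => i _; rewrite mulr_ge0 ?sqr_ge0.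
have expand i : w i * (`|D i| - e) ^+ 2 =
    w i * D i ^+ 2 - (2 * e) * (w i * `|D i|) + e ^+ 2 * w i.
  by rewrite -[D i ^+ 2]real_normK ?num_real; ring.
rewrite (eq_bigr _ (fun i _ => expand i)) big_split sumrB /= -!mulr_sumr w1 -/e.
lra.
Qed.

Section ExpectAffine.
Variables (R : realType) (I : finType) (p : I -> R).
Hypotheses (p_ge0 : forall i, 0 <= p i) (p_sum1 : \sum_i p i = 1).

Lemma expect_affine a b (F : I -> R) :
  \sum_i p i * (a + b * F i) = a + b * \sum_i p i * F i.
Proof.
under eq_bigr do rewrite mulrDr mulrCA.
by rewrite big_split -mulr_suml -mulr_sumr p_sum1 mul1r.
Qed.

Lemma expect_ge_affine a b (F G : I -> R) : (forall i, a + b * F i <= G i) ->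
  a + b * \sum_i p i * F i <= \sum_i p i * G i.
Proof. by move=> FG; rewrite -expect_affine; apply: ler_sum => i _; rewrite ler_wpM2l. Qed.

Lemma expect_le_affine a b (F G : I -> R) : (forall i, G i <= a + b * F i) ->
  \sum_i p i * G i <= a + b * \sum_i p i * F i.
Proof. by move=> GF; rewrite -expect_affine; apply: ler_sum => i _; rewrite ler_wpM2l. Qed.

End ExpectAffine.

Section InfRange.
Variables (R : realType) (G : Type) (F : G -> R).

Lemma inf_range_le_lb a g : (forall g', a <= F g') -> inf (range F) <= F g.
Proof. by move=> aF; apply: ge_inf; [exists a => _ [g' _ <-] | exists g]. Qed.

Lemma le_inf_range (g0 : G) a : (forall g, a <= F g) -> a <= inf (range F).
Proof. by move=> aF; apply: lb_le_inf => [|_ [g _ <-]]; [exists (F g0), g0 | exact: aF]. Qed.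

End InfRange.

Lemma inf_range_le (R : realType) (G : finType) (F : G -> R) g : inf (range F) <= F g.
Proof.
apply: (inf_range_le_lb (a := - \sum_g' `|F g'|)) => g'.
rewrite lerNl; apply: le_trans (ler_norm _) _.
by rewrite normrN (bigD1 g') //= lerDl sumr_ge0.
Qed.

Section ProductMeasure.
Variables (R : realType) (S : finType) (p : S -> R) (n : nat).
Local Notation P v := (\prod_(i < n) p (v i)).

Lemma expect_prod (G : 'I_n -> S -> R) :
  \sum_(v : {ffun 'I_n -> S}) P v * \prod_i G i (v i) = \prod_i \sum_s p s * G i s.
Proof.
rewrite (bigA_distr_bigA (fun i s => p s * G i s)) /=.
by apply: eq_bigr => v _; rewrite -big_split.
Qed.

Lemma prod_weights_sum1 : \sum_s p s = 1 -> \sum_(v : {ffun 'I_n -> S}) P v = 1.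
Proof.
move=> p1; rewrite -(bigA_distr_bigA (fun (i : 'I_n) s => p s)) /=.
exact: big1.
Qed.

Hypotheses (p_ge0 : forall s, 0 <= p s) (p_sum1 : \sum_s p s = 1).
Variable Y : 'I_n -> S -> R.
Hypotheses (Y_centered : forall i, \sum_s p s * Y i s = 0)
  (Y_sqr_le1 : forall i s, Y i s ^+ 2 <= 1).

Lemma expect_cross i j : i != j ->
  \sum_(v : {ffun 'I_n -> S}) P v * (Y i (v i) * Y j (v j)) = 0.
Proof.
move=> ij; pose G k s := if k == i then Y i s else if k == j then Y j s else 1.
transitivity (\sum_(v : {ffun 'I_n -> S}) P v * \prod_k G k (v k)).
  apply: eq_bigr => v _; congr (_ * _).
  rewrite (bigD1 i) //= (bigD1 j) /=; last by rewrite eq_sym ij.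
  rewrite /G eqxx eq_sym (negbTE ij) eqxx big1 ?mulr1 // => k /andP[ki kj].
  by rewrite (negbTE ki) (negbTE kj).
by rewrite expect_prod (bigD1 i) //= /G eqxx Y_centered mul0r.
Qed.

Lemma expect_sum_sqr_le :
  \sum_(v : {ffun 'I_n -> S}) P v * (\sum_i Y i (v i)) ^+ 2 <= n%:R.
Proof.
have -> : \sum_(v : {ffun 'I_n -> S}) P v * (\sum_i Y i (v i)) ^+ 2 =
    \sum_i \sum_j \sum_(v : {ffun 'I_n -> S}) P v * (Y i (v i) * Y j (v j)).
  transitivity (\sum_(v : {ffun 'I_n -> S}) \sum_i \sum_j P v * (Y i (v i) * Y j (v j))).
    apply: eq_bigr => v _; rewrite expr2 big_distrlr mulr_sumr /=.
    by apply: eq_bigr => i _; rewrite mulr_sumr.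
  by rewrite exchange_big; apply: eq_bigr => i _; rewrite exchange_big.
suff diag i : \sum_j \sum_(v : {ffun 'I_n -> S}) P v * (Y i (v i) * Y j (v j)) <= 1.
  by apply: le_trans (ler_sum _ (fun i _ => diag i)) _; rewrite sumr_const card_ord.
rewrite (bigD1 i) //= [X in _ + X]big1 ?addr0 => [|j ji]; last by rewrite expect_cross // eq_sym.
rewrite -[X in _ <= X](prod_weights_sum1 p_sum1); apply: ler_sum => v _.
by rewrite -expr2 ler_piMr ?prodr_ge0.
Qed.

Lemma expect_abs_mean_le : (0 < n)%N ->
  \sum_(v : {ffun 'I_n -> S}) P v * `|n%:R^-1 * \sum_i Y i (v i)|
    <= (Num.sqrt n%:R)^-1.
Proof.
move=> n_gt0; have n0 : 0 < n%:R :> R by rewrite ltr0n.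
set e := \sum_(v : {ffun 'I_n -> S}) P v * `|\sum_i Y i (v i)|.
have e_le : e <= Num.sqrt n%:R.
  have e0 : 0 <= e by apply: sumr_ge0 => v _; rewrite mulr_ge0 ?prodr_ge0.
  rewrite -(ger0_norm e0) -sqrtr_sqr ler_wsqrtr //.
  apply: le_trans expect_sum_sqr_le.
  by apply: expect_abs_sqr_le => [v|]; [exact: prodr_ge0 | exact: prod_weights_sum1].
have -> : \sum_(v : {ffun 'I_n -> S}) P v * `|n%:R^-1 * \sum_i Y i (v i)| = n%:R^-1 * e.
  rewrite mulr_sumr; apply: eq_bigr => v _.
  by rewrite normrM ger0_norm ?invr_ge0 ?ltW // mulrCA.
have sq := sqr_sqrtr (ltW n0).
have n1_ge0 : 0 <= n%:R^-1 :> R by rewrite invr_ge0 ltW.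
apply: le_trans (ler_wpM2l n1_ge0 e_le) _.
by rewrite -{1}sq expr2 invfM -mulrA mulVf ?mulr1 // gt_eqF // sqrtr_gt0.
Qed.

End ProductMeasure.

Definition ffun_upd (I V : finType) (ws : {ffun I -> V}) (t : I) (v : V) : {ffun I -> V} :=
  [ffun s => if s == t then v else ws s].

Lemma ffun_upd_id (I V : finType) (ws : {ffun I -> V}) t v :
  ffun_upd (ffun_upd ws t v) t (ws t) = ws.
Proof. by apply/ffunP => s; rewrite !ffunE; case: eqP => // ->. Qed.

Lemma expect_resample (R : realType) (I V : finType) (q : I -> V -> R) (t : I)
    (H : {ffun I -> V} -> R) : \sum_v q t v = 1 ->
  \sum_(ws : {ffun I -> V}) (\prod_s q s (ws s)) * H ws =
  \sum_(ws : {ffun I -> V}) (\prod_s q s (ws s)) * \sum_v q t v * H (ffun_upd ws t v).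
Proof.
move=> qt1.
have prod_upd ws v :
    \prod_s q s (ffun_upd ws t v s) = q t v * \prod_(s | s != t) q s (ws s).
  rewrite (bigD1 t) //= ffunE eqxx; congr (_ * _).
  by apply: eq_bigr => s /negbTE st; rewrite ffunE st.
pose swap (p : {ffun I -> V} * V) := (ffun_upd p.1 t p.2, p.1 t).
have swapK : involutive swap.
  by move=> [ws v]; rewrite /swap /= ffun_upd_id ffunE eqxx.
under [RHS]eq_bigr do rewrite mulr_sumr.
rewrite pair_big /= (reindex_inj (inv_inj swapK)) /=.
transitivity (\sum_(p : {ffun I -> V} * V) (\prod_s q s (p.1 s)) * (q t p.2 * H p.1)).
  rewrite -(pair_big xpredT xpredT (fun (ws : {ffun I -> V}) v =>
    (\prod_s q s (ws s)) * (q t v * H ws))) /=.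
  by apply: eq_bigr => ws _; rewrite -mulr_sumr -mulr_suml qt1 mul1r.
apply: eq_bigr => -[ws v] _ /=.
by rewrite ffun_upd_id prod_upd [\prod_s _](bigD1 t) //=; ring.
Qed.

Section Empirical.
Variables (R : realType) (X : finType) (n : nat).
Implicit Types xs : {ffun 'I_n -> X}.

Lemma empE xs y : emp R xs y = n%:R^-1 * \sum_i (xs i == y)%:R.
Proof.
rewrite /emp mulrC -sum1dep_card natr_sum big_mkcond /=.
by congr (_ * _); apply: eq_bigr => i _; case: (xs i == y).
Qed.

Lemma emp_average xs (F : X -> R) :
  \sum_x emp R xs x * F x = n%:R^-1 * \sum_i F (xs i).
Proof.
under eq_bigr do rewrite empE -mulrA mulr_suml.
rewrite -mulr_sumr exchange_big /=; congr (_ * _); apply: eq_bigr => i _.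
rewrite (bigD1 (xs i)) //= eqxx mul1r big1 ?addr0 // => x.
by rewrite eq_sym => /negbTE ->; rewrite mul0r.
Qed.

Lemma emp_inQn xs : inQn n (emp R xs).
Proof.
move=> x; exists #|[set i | xs i == x]|; split => //.
by apply: leq_trans (max_card _) _; rewrite card_ord.
Qed.

Lemma inQn_inI (z : X -> R) : inQn n z -> inI z.
Proof.
move=> zQ x; have [k [kn ->]] := zQ x.
case: n kn => [|m] kn; first by rewrite invr0 mulr0 lexx ler01.
by rewrite divr_ge0 //= ler_pdivrMr ?ltr0n // mul1r ler_nat.
Qed.

Lemma expect_emp_dist (S : finType) (p : S -> R) (h : 'I_n -> S -> X) (mu : X -> R) :
  (0 < n)%N -> (forall s, 0 <= p s) -> \sum_s p s = 1 ->
  (forall y, mu y = n%:R^-1 * \sum_i \sum_s p s * (h i s == y)%:R) ->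
  \sum_(v : {ffun 'I_n -> S}) (\prod_i p (v i)) * supdist (emp R [ffun i => h i (v i)]) mu
    <= #|X|%:R / Num.sqrt n%:R.
Proof.
move=> n_gt0 p0 p1 muE.
have P0 (v : {ffun 'I_n -> S}) : 0 <= \prod_i p (v i) by exact: prodr_ge0.
apply: le_trans (ler_sum _ (fun v _ => ler_wpM2l (P0 v) (supnorm_le_sum _))) _.
have -> : #|X|%:R / Num.sqrt n%:R = \sum_(y : X) (Num.sqrt n%:R)^-1 :> R.
  by rewrite sumr_const mulr_natl.
under eq_bigr do rewrite mulr_sumr.
rewrite exchange_big /=; apply: ler_sum => y _.
pose a i s : R := (h i s == y)%:R.
pose Y i s := a i s - \sum_s' p s' * a i s'.
have a_mean_ge0 i : 0 <= \sum_s p s * a i s by apply: sumr_ge0 => s _; rewrite mulr_ge0.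
have a_mean_le1 i : \sum_s p s * a i s <= 1.
  by rewrite -p1; apply: ler_sum => s _; rewrite ler_piMr // lern1 leq_b1.
have devE (v : {ffun 'I_n -> S}) :
    emp R [ffun i => h i (v i)] y - mu y = n%:R^-1 * \sum_i Y i (v i).
  by rewrite empE muE sumrB mulrBr; under eq_bigr do rewrite ffunE.
under eq_bigr do rewrite devE.
apply: expect_abs_mean_le => // [i|i s].
  by rewrite /Y; under eq_bigr do rewrite mulrBr; rewrite sumrB -mulr_suml p1 mul1r subrr.
have := a_mean_ge0 i; have := a_mean_le1 i; rewrite /Y /a.
by case: (h i s == y) => /=; nra.
Qed.

End Empirical.

Lemma weighted_sum_lip (R : realType) (X : finType) (z1 z2 a1 a2 : X -> R) K M :
  inI z1 -> (forall x, `|a1 x - a2 x| <= K * supdist z1 z2) ->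
  (forall x, `|a2 x| <= M) ->
  `|\sum_x z1 x * a1 x - \sum_x z2 x * a2 x| <= #|X|%:R * (K + M) * supdist z1 z2.
Proof.
move=> z1I a12 a2M.
have term x : `|z1 x * a1 x - z2 x * a2 x| <= (K + M) * supdist z1 z2.
  have -> : z1 x * a1 x - z2 x * a2 x = z1 x * (a1 x - a2 x) + (z1 x - z2 x) * a2 x.
    by ring.
  apply: le_trans (ler_normD _ _) _; rewrite [(K + M) * _]mulrDl !normrM.
  apply: lerD; first by apply: le_trans (a12 x); rewrite ler_piMl ?inI_norm_le1.
  by rewrite mulrC ler_pM ?a2M //; exact: (ler_supnorm (fun x => z1 x - z2 x)).
rewrite -sumrB; apply: le_trans (ler_norm_sum _ _ _) _.
by apply: le_trans (ler_sum _ (fun x _ => term x)) _; rewrite sumr_const -mulrA mulr_natl.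
Qed.

Section ModelLipschitz.
Variables (R : realType) (X U W : finType) (T : nat) (pw : nat -> W -> R)
  (f : nat -> X -> U -> W -> (X -> R) -> X) (l : nat -> X -> U -> (X -> R) -> R)
  (K1 K2 : nat -> R).
Hypothesis pw_prob : forall t, (1 <= t <= T)%N ->
  (forall w, 0 <= pw t w) /\ \sum_(w : W) pw t w = 1.
Hypothesis Pk_lip : forall t y x u z1 z2, (1 <= t <= T)%N -> inI z1 -> inI z2 ->
  `|Pk pw f t y x u z1 - Pk pw f t y x u z2| <= K1 t * supdist z1 z2.
Hypothesis l_lip : forall t x u z1 z2, (1 <= t <= T)%N -> inI z1 -> inI z2 ->
  `|l t x u z1 - l t x u z2| <= K2 t * supdist z1 z2.

Definition cost_bound t := \sum_x \sum_u `|l t x u (fun _ => 0)| + `|K2 t|.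
Definition fhat_lipc t := #|X|%:R * (`|K1 t| + 1).
Definition chat_lipc t := #|X|%:R * (`|K2 t| + cost_bound t).

Lemma fhat_lipc_ge0 t : 0 <= fhat_lipc t.
Proof. by rewrite mulr_ge0 ?addr_ge0. Qed.

Lemma chat_lipc_ge0 t : 0 <= chat_lipc t.
Proof.
by rewrite mulr_ge0 ?addr_ge0 ?sumr_ge0 // => x _; rewrite sumr_ge0.
Qed.

Lemma ler_norm_mul_supdist (K : R) (z1 z2 : X -> R) : K * supdist z1 z2 <= `|K| * supdist z1 z2.
Proof. by rewrite ler_wpM2r ?supnorm_ge0 ?ler_norm. Qed.

Lemma norm_Pk_le1 t y x u z : (1 <= t <= T)%N -> `|Pk pw f t y x u z| <= 1.
Proof.
move=> /pw_prob[pw0 pw1]; rewrite ger0_norm; last first.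
  by apply: sumr_ge0 => w _; rewrite mulr_ge0.
by rewrite -pw1; apply: ler_sum => w _; rewrite ler_piMl // lern1 leq_b1.
Qed.

Lemma norm_l_le t x u z : (1 <= t <= T)%N -> inI z -> `|l t x u z| <= cost_bound t.
Proof.
move=> ht zI; have I0 : inI (fun _ : X => 0 : R) by move=> ?; rewrite lexx ler01.
rewrite -[l t x u z](subrK (l t x u (fun _ => 0))) addrC.
apply: le_trans (ler_normD _ _) (lerD _ _).
  rewrite /cost_bound (bigD1 x) //= (bigD1 u) //= -addrA lerDl !addr_ge0 ?sumr_ge0 //.
  by move=> y _; rewrite sumr_ge0.
apply: le_trans (l_lip x u ht zI I0) (le_trans (ler_norm_mul_supdist _ _ _) _).
rewrite ler_piMr // supnorm_le // => y; rewrite subr0; exact: inI_norm_le1.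
Qed.

Lemma fhat_lip t (g : {ffun X -> U}) (z1 z2 : X -> R) :
  (1 <= t <= T)%N -> inI z1 -> inI z2 ->
  supdist (fhat pw f t z1 g) (fhat pw f t z2 g) <= fhat_lipc t * supdist z1 z2.
Proof.
move=> ht z1I z2I; apply: supnorm_le => [|y].
  by rewrite mulr_ge0 ?fhat_lipc_ge0 ?supnorm_ge0.
rewrite /fhat /fhat_lipc; apply: weighted_sum_lip => // x.
  exact: le_trans (Pk_lip _ _ _ ht z1I z2I) (ler_norm_mul_supdist _ _ _).
exact: norm_Pk_le1.
Qed.

Lemma chat_lip t (g : {ffun X -> U}) (z1 z2 : X -> R) :
  (1 <= t <= T)%N -> inI z1 -> inI z2 ->
  `|chat l t z1 g - chat l t z2 g| <= chat_lipc t * supdist z1 z2.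
Proof.
move=> ht z1I z2I; rewrite /chat_lipc; apply: weighted_sum_lip => // x.
  exact: le_trans (l_lip _ _ ht z1I z2I) (ler_norm_mul_supdist _ _ _).
exact: norm_l_le.
Qed.

End ModelLipschitz.

Section CostToGo.
Variables (R : realType) (X U W : finType) (n T : nat) (px : X -> R) (pw : nat -> W -> R)
  (f : nat -> X -> U -> W -> (X -> R) -> X) (l : nat -> X -> U -> (X -> R) -> R)
  (g : mf_strategy R X U).
Implicit Types (xs : {ffun 'I_n -> X}) (v : {ffun 'I_n -> W}).
Local Notation noises := {ffun 'I_T -> {ffun 'I_n -> W}}.

(* As in [traj], index [k] refers to time [k.+1]. *)
Definition noise_weight k v : R := \prod_i pw k.+1 (v i).

Definition decision_rule k xs : {ffun X -> U} := [ffun x => g k.+1 x (emp R xs)].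

Definition next_state k (ga : {ffun X -> U}) xs v : {ffun 'I_n -> X} :=
  [ffun i => f k.+1 (xs i) (ga (xs i)) (v i) (emp R xs)].

Definition stage_cost k xs : R :=
  n%:R^-1 * \sum_i l k.+1 (xs i) (g k.+1 (xs i) (emp R xs)) (emp R xs).

Fixpoint cost_to_go r k xs : R :=
  match r with
  | 0 => 0
  | r'.+1 => stage_cost k xs +
      \sum_v noise_weight k v * cost_to_go r' k.+1 (next_state k (decision_rule k xs) xs v)
  end.

Lemma traj_succ x1 (ws : noises) k (kT : (k < T)%N) :
  let xs := traj f g x1 ws k in
  traj f g x1 ws k.+1 = next_state k (decision_rule k xs) xs (ws (Ordinal kT)).
Proof.
by rewrite /= (insubT (fun j => j < T)%N kT) /=; apply/ffunP => i; rewrite !ffunE.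
Qed.

Lemma traj_eq x1 (ws ws' : noises) k :
  (forall s : 'I_T, (s < k)%N -> ws s = ws' s) -> traj f g x1 ws k = traj f g x1 ws' k.
Proof.
elim: k => [//|k IH] ws_eq /=.
rewrite IH => [|s sk]; last by rewrite ws_eq // ltnS ltnW.
by case: insubP => [i _ ik|//]; rewrite ws_eq // ik.
Qed.

Local Notation Pw ws := (\prod_(t < T) noise_weight t (ws t)).

Hypothesis noise_weight_sum1 : forall k, (k < T)%N -> \sum_v noise_weight k v = 1.

Lemma expect_traj_succ x1 k (kT : (k < T)%N) (H : {ffun 'I_n -> X} -> R) :
  \sum_(ws : noises) Pw ws * H (traj f g x1 ws k.+1) =
  \sum_(ws : noises) Pw ws *
    (let xs := traj f g x1 ws k in
     \sum_v noise_weight k v * H (next_state k (decision_rule k xs) xs v)).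
Proof.
rewrite (@expect_resample _ _ _ (fun (s : 'I_T) => noise_weight s) (Ordinal kT) _
  (noise_weight_sum1 kT)).
apply: eq_bigr => ws _; congr (_ * _); apply: eq_bigr => v _; congr (_ * _).
rewrite traj_succ ffunE eqxx.
suff -> : traj f g x1 (ffun_upd ws (Ordinal kT) v) k = traj f g x1 ws k by [].
apply: traj_eq => s sk; rewrite ffunE; case: eqP => // sE.
by move: sk; rewrite sE ltnn.
Qed.

Lemma Jcost_cost_to_go :
  Jcost n T px pw f l g = \sum_(x1 : {ffun 'I_n -> X}) (\prod_i px (x1 i)) * cost_to_go T 0 x1.
Proof.
pose partial k x1 (ws : noises) := \sum_(t < k) stage_cost t (traj f g x1 ws t) +
  cost_to_go (T - k) k (traj f g x1 ws k).
have partial_succ (x1 : {ffun 'I_n -> X}) k : (k < T)%N ->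
    \sum_(ws : noises) Pw ws * partial k.+1 x1 ws = \sum_(ws : noises) Pw ws * partial k x1 ws.
  move=> kT; rewrite /partial; have -> : (T - k = (T - k.+1).+1)%N by lia.
  under eq_bigr do rewrite big_ord_recr -addrA !mulrDr.
  under [RHS]eq_bigr do rewrite /= !mulrDr.
  by rewrite !big_split /= expect_traj_succ.
have partial_0 (x1 : {ffun 'I_n -> X}) :
    \sum_(ws : noises) Pw ws * partial 0%N x1 ws = cost_to_go T 0 x1.
  rewrite /partial /=; under eq_bigr do rewrite big_ord0 add0r subn0.
  rewrite -mulr_suml.
  rewrite -(bigA_distr_bigA (fun (t : 'I_T) v => noise_weight t v)) /= big1 ?mul1r //.
  by move=> t _; apply: noise_weight_sum1.
have partial_T (x1 : {ffun 'I_n -> X}) k : (k <= T)%N ->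
    \sum_(ws : noises) Pw ws * partial k x1 ws = cost_to_go T 0 x1.
  by elim: k => [|k IH] kT; [exact: partial_0 | rewrite partial_succ // IH // ltnW].
rewrite /Jcost; apply: eq_bigr => x1 _; rewrite -(partial_T x1 T) // mulr_sumr.
by apply: eq_bigr => ws _; rewrite /partial subnn addr0 mulrA.
Qed.

End CostToGo.

Section Bounds.
Variables (R : realType) (X U W : finType) (T : nat) (px : X -> R) (pw : nat -> W -> R)
  (f : nat -> X -> U -> W -> (X -> R) -> X) (l : nat -> X -> U -> (X -> R) -> R)
  (K1 K2 : nat -> R).
Hypotheses (px_ge0 : forall x, 0 <= px x) (px_sum1 : \sum_x px x = 1).
Hypothesis pw_prob : forall t, (1 <= t <= T)%N ->
  (forall w, 0 <= pw t w) /\ \sum_(w : W) pw t w = 1.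
Hypothesis Pk_lip : forall t y x u z1 z2, (1 <= t <= T)%N -> inI z1 -> inI z2 ->
  `|Pk pw f t y x u z1 - Pk pw f t y x u z2| <= K1 t * supdist z1 z2.
Hypothesis l_lip : forall t x u z1 z2, (1 <= t <= T)%N -> inI z1 -> inI z2 ->
  `|l t x u z1 - l t x u z2| <= K2 t * supdist z1 z2.
Variables (n : nat) (Q : (X -> R) -> (X -> R)).
Hypotheses (n_gt0 : (0 < n)%N) (Q_nearest : nearest_quantizer n Q).
Local Notation sqrtn := (Num.sqrt n%:R : R).
Implicit Types (xs : {ffun 'I_n -> X}) (v : {ffun 'I_n -> W}).

Lemma time_in_range k : (k < T)%N -> (1 <= k.+1 <= T)%N.
Proof. by []. Qed.

Lemma noise_weight_ge0 k v : (k < T)%N -> 0 <= noise_weight pw k v.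
Proof. by move=> /time_in_range /pw_prob[pw0 _]; apply: prodr_ge0. Qed.

Lemma noise_weight_sum1 k : (k < T)%N -> \sum_(v : {ffun 'I_n -> W}) noise_weight pw k v = 1.
Proof. by move=> /time_in_range /pw_prob[_ pw1]; apply: prod_weights_sum1. Qed.

Lemma stage_cost_chat (g : mf_strategy R X U) k xs :
  stage_cost l g k xs = chat l k.+1 (emp R xs) (decision_rule g k xs).
Proof. by rewrite /chat emp_average; congr (_ * _); apply: eq_bigr => i _; rewrite ffunE. Qed.

Lemma expect_emp_next_dist k (ga : {ffun X -> U}) xs : (k < T)%N ->
  \sum_(v : {ffun 'I_n -> W}) noise_weight pw k v *
      supdist (emp R (next_state f k ga xs v)) (fhat pw f k.+1 (emp R xs) ga)
    <= #|X|%:R / sqrtn.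
Proof.
move=> /time_in_range /pw_prob[pw0 pw1].
apply: (expect_emp_dist (h := fun i w => f k.+1 (xs i) (ga (xs i)) w (emp R xs))) => // y.
rewrite /fhat emp_average; congr (_ * _); apply: eq_bigr => i _.
by apply: eq_bigr => w _; rewrite mulrC.
Qed.

Lemma init_weight_ge0 (x1 : {ffun 'I_n -> X}) : 0 <= \prod_i px (x1 i).
Proof. exact: prodr_ge0. Qed.

Lemma expect_emp_init_dist :
  \sum_(x1 : {ffun 'I_n -> X}) (\prod_i px (x1 i)) * supdist (emp R x1) (Q px)
    <= 2 * (#|X|%:R / sqrtn).
Proof.
apply: le_trans (expect_le_affine init_weight_ge0 (prod_weights_sum1 n px_sum1) (a := 0) (b := 2)
  (F := fun x1 => supdist (emp R x1) px) _) _.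
  by move=> x1; rewrite add0r; apply: nearest_quantizer_dist Q_nearest (emp_inQn _ _).
rewrite add0r ler_wpM2l //.
have ffun_id (x1 : {ffun 'I_n -> X}) : [ffun i => x1 i] = x1 by apply/ffunP => i; rewrite ffunE.
apply: le_trans (expect_emp_dist (h := fun _ x => x) n_gt0 px_ge0 px_sum1 _).
  by under [X in _ <= X]eq_bigr do rewrite ffun_id.
move=> y; have px_y : \sum_x px x * (x == y)%:R = px y.
  by rewrite (bigD1 y) //= eqxx mulr1 big1 ?addr0 // => x /negbTE ->; rewrite mulr0.
under eq_bigr do rewrite px_y.
by rewrite sumr_const card_ord -[px y *+ n]mulr_natl mulKf // pnatr_eq0 -lt0n.
Qed.

Lemma expect_next_dist k (ga : {ffun X -> U}) xs z : (k < T)%N -> inQn n z ->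
  \sum_(v : {ffun 'I_n -> W}) noise_weight pw k v *
      supdist (emp R (next_state f k ga xs v)) (Q (fhat pw f k.+1 z ga))
    <= 2 * (#|X|%:R / sqrtn + fhat_lipc X K1 k.+1 * supdist (emp R xs) z).
Proof.
move=> kT zQ; set m := emp R xs; set c := fhat_lipc X K1 k.+1 * supdist m z.
apply: le_trans (expect_le_affine (fun v => noise_weight_ge0 v kT) (noise_weight_sum1 kT)
  (a := 2 * c) (b := 2)
  (F := fun v => supdist (emp R (next_state f k ga xs v)) (fhat pw f k.+1 m ga)) _) _.
  move=> v; set m' := emp R (next_state f k ga xs v).
  apply: le_trans (nearest_quantizer_dist _ Q_nearest (emp_inQn _ _)) _.
  have := supdist_triangle m' (fhat pw f k.+1 m ga) (fhat pw f k.+1 z ga).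
  have := fhat_lip pw_prob Pk_lip ga (time_in_range kT) (inQn_inI (emp_inQn R xs)) (inQn_inI zQ).
  rewrite -/m -/c; lra.
have := expect_emp_next_dist ga xs kT; rewrite -/m; lra.
Qed.

(* The factor 2 is the cost of quantization, see [nearest_quantizer_dist]. *)
Fixpoint val_lipc r : R :=
  if r is r'.+1 then chat_lipc l K2 (T - r).+1 + 2 * val_lipc r' * fhat_lipc X K1 (T - r).+1
  else 0.

Fixpoint val_err r : R := if r is r'.+1 then val_err r' + 2 * val_lipc r' * #|X|%:R else 0.

Lemma val_lipc_ge0 r : 0 <= val_lipc r.
Proof.
by elim: r => //= r IH; rewrite addr_ge0 ?chat_lipc_ge0 // mulr_ge0 ?fhat_lipc_ge0 // mulr_ge0.
Qed.

Lemma cost_to_go_lb (g : mf_strategy R X U) r : (r <= T)%N -> forall xs z, inQn n z ->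
  Vaux pw f l Q r (T - r).+1 z - (val_lipc r * supdist (emp R xs) z + val_err r / sqrtn)
    <= cost_to_go pw f l g r (T - r) xs.
Proof.
elim: r => [|r IH] rT xs z zQ; first by rewrite /= !mul0r addr0 subrr.
set k := (T - r.+1)%N; have kT : (k < T)%N by rewrite /k; lia.
have Tr : (T - r = k.+1)%N by rewrite /k; lia.
rewrite Tr in IH; rewrite /= -/k stage_cost_chat.
set ga := decision_rule g k xs; set m := emp R xs; set z' := Q (fhat pw f k.+1 z ga).
have V_le := inf_range_le
  (fun ga' => chat l k.+1 z ga' + Vaux pw f l Q r k.+2 (Q (fhat pw f k.+1 z ga'))) ga.
have := chat_lip l_lip ga (time_in_range kT) (inQn_inI (emp_inQn R xs)) (inQn_inI zQ).
rewrite ler_norml => /andP[chat_lb _].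
have next_pt v : Vaux pw f l Q r k.+2 z' - val_err r / sqrtn +
    - val_lipc r * supdist (emp R (next_state f k ga xs v)) z'
    <= cost_to_go pw f l g r k.+1 (next_state f k ga xs v).
  by have := IH (ltnW rT) (next_state f k ga xs v) z' (Q_nearest _).1; lra.
have next_lb := expect_ge_affine (fun v => noise_weight_ge0 v kT) (noise_weight_sum1 kT)
  (G := fun v => cost_to_go pw f l g r k.+1 (next_state f k ga xs v)) next_pt.
have := ler_wpM2l (val_lipc_ge0 r) (expect_next_dist ga xs kT zQ).
rewrite -/m -/z' in chat_lb next_lb V_le *; lra.
Qed.

Lemma zhat_inQn psi k : inQn n (zhat px pw f Q psi k).
Proof. by case: k => [|k] /=; apply: (Q_nearest _).1. Qed.

Lemma cost_to_go_gdec_ub psi : is_minimizer T n pw f l Q psi ->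
  forall r, (r <= T)%N -> forall xs,
  cost_to_go pw f l (gdec px pw f Q psi) r (T - r) xs
    <= Vaux pw f l Q r (T - r).+1 (zhat px pw f Q psi (T - r)) +
       (val_lipc r * supdist (emp R xs) (zhat px pw f Q psi (T - r)) + val_err r / sqrtn).
Proof.
move=> psi_min; elim=> [|r IH] rT xs; first by rewrite /= !mul0r !addr0.
set k := (T - r.+1)%N; set z := zhat px pw f Q psi k; have kT : (k < T)%N by rewrite /k; lia.
have Tr : (T - r = k.+1)%N by rewrite /k; lia.
rewrite Tr in IH; rewrite /= -/k stage_cost_chat.
set gd := gdec px pw f Q psi; set m := emp R xs.
have -> : decision_rule gd k xs = psi k.+1 z by apply/ffunP => x; rewrite ffunE.
set ga := psi k.+1 z; set z' := Q (fhat pw f k.+1 z ga).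
have V_ge : chat l k.+1 z ga + Vaux pw f l Q r k.+2 z' <= inf (range
    (fun ga' => chat l k.+1 z ga' + Vaux pw f l Q r k.+2 (Q (fhat pw f k.+1 z ga')))).
  apply: (le_inf_range ga) => ga'.
  have := psi_min k.+1 (time_in_range kT) z (zhat_inQn psi k) ga'.
  by rewrite /Vtil (_ : T.+1 - k.+2 = r)%N //; rewrite /k; lia.
have := chat_lip l_lip ga (time_in_range kT) (inQn_inI (emp_inQn R xs))
  (inQn_inI (zhat_inQn psi k)).
rewrite ler_norml => /andP[_ chat_ub].
have next_pt v : cost_to_go pw f l gd r k.+1 (next_state f k ga xs v) <=
    Vaux pw f l Q r k.+2 z' + val_err r / sqrtn +
    val_lipc r * supdist (emp R (next_state f k ga xs v)) z'.
  by have := IH (ltnW rT) (next_state f k ga xs v); rewrite /= -/z'; lra.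
have next_ub := expect_le_affine (fun v => noise_weight_ge0 v kT) (noise_weight_sum1 kT)
  (F := fun v => supdist (emp R (next_state f k ga xs v)) z')
  (G := fun v => cost_to_go pw f l gd r k.+1 (next_state f k ga xs v)) next_pt.
have := ler_wpM2l (val_lipc_ge0 r) (expect_next_dist ga xs kT (zhat_inQn psi k)).
rewrite -/m -/z' in chat_ub next_ub V_ge *; lra.
Qed.

Local Notation V1 := (Vaux pw f l Q T 1 (Q px)).
Local Notation err := (val_err T + 2 * val_lipc T * #|X|%:R).

Lemma Jcost_lb (g : mf_strategy R X U) : V1 - err / sqrtn <= Jcost n T px pw f l g.
Proof.
rewrite (Jcost_cost_to_go _ _ _ _ noise_weight_sum1).
have pt (x1 : {ffun 'I_n -> X}) : V1 - val_err T / sqrtn + - val_lipc T * supdist (emp R x1) (Q px)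
    <= cost_to_go pw f l g T 0 x1.
  by have := cost_to_go_lb g (leqnn T) x1 (Q_nearest px).1; rewrite subnn; lra.
have := expect_ge_affine init_weight_ge0 (prod_weights_sum1 n px_sum1)
  (F := fun x1 => supdist (emp R x1) (Q px)) (G := fun x1 => cost_to_go pw f l g T 0 x1) pt.
have := ler_wpM2l (val_lipc_ge0 T) expect_emp_init_dist; lra.
Qed.

Lemma Jcost_gdec_ub psi : is_minimizer T n pw f l Q psi ->
  Jcost n T px pw f l (gdec px pw f Q psi) <= V1 + err / sqrtn.
Proof.
move=> psi_min; rewrite (Jcost_cost_to_go _ _ _ _ noise_weight_sum1).
have pt (x1 : {ffun 'I_n -> X}) : cost_to_go pw f l (gdec px pw f Q psi) T 0 x1 <=
    V1 + val_err T / sqrtn + val_lipc T * supdist (emp R x1) (Q px).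
  by have := cost_to_go_gdec_ub psi_min (leqnn T) x1; rewrite subnn /=; lra.
have := expect_le_affine init_weight_ge0 (prod_weights_sum1 n px_sum1)
  (F := fun x1 => supdist (emp R x1) (Q px))
  (G := fun x1 => cost_to_go pw f l (gdec px pw f Q psi) T 0 x1) pt.
have := ler_wpM2l (val_lipc_ge0 T) expect_emp_init_dist; lra.
Qed.

Lemma Jcost_gdec_near_opt psi : is_minimizer T n pw f l Q psi ->
  `|Jcost n T px pw f l (gdec px pw f Q psi) - Jstar n T px pw f l| <= 2 * err / sqrtn.
Proof.
move=> psi_min; set gd := gdec px pw f Q psi.
have Jstar_lb : V1 - err / sqrtn <= Jstar n T px pw f l.
  exact: le_inf_range gd _ Jcost_lb.
have Jstar_ub : Jstar n T px pw f l <= Jcost n T px pw f l gd.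
  exact: inf_range_le_lb Jcost_lb.
have := Jcost_gdec_ub psi_min; rewrite ger0_norm ?subr_ge0 // -/gd; lra.
Qed.

End Bounds.

Theorem corollary1 (R : realType) (X U W : finType) (T : nat)
    (px : X -> R) (pw : nat -> W -> R)
    (f : nat -> X -> U -> W -> (X -> R) -> X)
    (l : nat -> X -> U -> (X -> R) -> R) (K1 K2 : nat -> R) :
  (forall x, 0 <= px x) -> \sum_(x : X) px x = 1 ->
  (forall t, (1 <= t <= T)%N -> (forall w, 0 <= pw t w) /\ \sum_(w : W) pw t w = 1) ->
  (forall t x u z, (1 <= t <= T)%N -> inI z -> 0 <= l t x u z) ->
  (forall t, (1 <= t <= T)%N -> 0 < K1 t /\ 0 < K2 t) ->
  (forall t y x u z1 z2, (1 <= t <= T)%N -> inI z1 -> inI z2 ->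
     `|Pk pw f t y x u z1 - Pk pw f t y x u z2|
       <= K1 t * supnorm (fun v => z1 v - z2 v)) ->
  (forall t x u z1 z2, (1 <= t <= T)%N -> inI z1 -> inI z2 ->
     `|l t x u z1 - l t x u z2| <= K2 t * supnorm (fun v => z1 v - z2 v)) ->
  exists C : R, forall n : nat, (0 < n)%N ->
    forall (Q : (X -> R) -> (X -> R)) (psi : nat -> (X -> R) -> {ffun X -> U}),
      nearest_quantizer n Q ->
      is_minimizer T n pw f l Q psi ->
      `|Jcost n T px pw f l (gdec px pw f Q psi) - Jstar n T px pw f l|
        <= C / Num.sqrt n%:R.
Proof.
move=> px_ge0 px_sum1 pw_prob _ _ Pk_lip l_lip.
exists (2 * (val_err T l K1 K2 T + 2 * val_lipc T l K1 K2 T * #|X|%:R)).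
move=> n n_gt0 Q psi Q_nearest psi_min.
exact: Jcost_gdec_near_opt.
Qed.
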